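(* Let $t=1$, let $r_{\max}$ be the maximum requirement of a family, and let $\rho$ be the least common multiple of $\{1,\dots,r_{\max}\}$. If $F'\subseteq F$ is a set of families with $\sum_{f_i\in F'}\boldsymbol{r}_i> r_{\max}(\rho-1)$, then $F'$ contains a homogeneous $\rho$-block.
   Context: There is a single service, so each family $f_i\in F$ has a requirement $\boldsymbol{r}_i\in\mathbb{N}$, and $r_{\max}=\max_{f_i\in F}\boldsymbol{r}_i$. A set $F''\subseteq F$ of families is a homogeneous $\rho$-block if all families in $F''$ have the same requirement and their total requirement equals exactly $\rho$. *)

From mathcomp Require Import all_boot.

(* Single service (t = 1): a set of families is modelled as a finite type
   [F], each family f having a requirement [r f : nat]. *)

Definition rmax (F : finType) (r : F -> nat) : nat := \max_(f : F) r f.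

Definition lcm_upto (n : nat) : nat := \big[lcmn/1%N]_(1 <= k < n.+1) k.

Definition homogeneous_block (F : finType) (r : F -> nat) (rho : nat)
    (B : {set F}) : Prop :=
  (exists c, forall f, f \in B -> r f = c) /\ \sum_(f in B) r f = rho.

From mathcomp Require Import all_boot.

(* Group the families of F' by requirement. If every value c in 1..r_max
   occurred with total requirement c * #(families of requirement c) < rho,
   the total requirement of F' would be at most r_max (rho - 1). So some
   class of equal requirement c has total at least rho, and since c divides
   rho, any rho / c of its families form a homogeneous rho-block. *)

Lemma dvdn_lcm_upto n c : 0 < c -> c <= n -> c %| lcm_upto n.
Proof.
move=> c_gt0 le_cn; rewrite /lcm_upto (bigD1_seq c) ?iota_uniq //=.
  exact: dvdn_lcml.
by rewrite mem_index_iota c_gt0 ltnS.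
Qed.

Lemma lcm_upto_gt0 n : 0 < lcm_upto n.
Proof.
rewrite /lcm_upto big_seq; elim/big_ind: _ => // [a b a_gt0 b_gt0|k].
  by rewrite lcmn_gt0 a_gt0.
by rewrite mem_index_iota => /andP[].
Qed.

Section RequirementClasses.

Set Implicit Arguments.
Unset Strict Implicit.

Variables (F : finType) (r : F -> nat).

Definition requirement_class (A : {set F}) (c : nat) : {set F} :=
  [set f in A | r f == c].

Lemma sum_by_requirement (A : {set F}) n :
    (forall f, f \in A -> r f <= n) ->
  \sum_(f in A) r f = \sum_(c < n.+1) c * #|requirement_class A c|.
Proof.
move=> le_rn.
rewrite (partition_big (fun f => inord (r f) : 'I_n.+1) xpredT) //.
apply: eq_bigr => c _.
have class_c f : (f \in A) && (inord (r f) == c) = (f \in requirement_class A c).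
  rewrite inE; case fA: (f \in A) => //=.
  by rewrite -(inj_eq val_inj) /= inordK // ltnS le_rn.
rewrite (eq_bigl _ _ class_c) (eq_bigr (fun=> nat_of_ord c)).
  by rewrite sum_nat_const mulnC.
by move=> f /setIdP[_ /eqP].
Qed.

Lemma exists_heavy_requirement_class (A : {set F}) n m :
    (forall f, f \in A -> r f <= n) -> n * m < \sum_(f in A) r f ->
  exists2 c, 0 < c <= n & m < c * #|requirement_class A c|.
Proof.
move=> le_rn sum_gt.
case: (boolP [exists c : 'I_n.+1, (0 < c) && (m < c * #|requirement_class A c|)]).
  by case/existsP=> c /andP[c_gt0 heavy]; exists c; rewrite // c_gt0 -ltnS ltn_ord.
move/existsPn=> no_heavy; move: sum_gt; rewrite ltnNge => /negP[].
rewrite (sum_by_requirement le_rn) big_ord_recl mul0n add0n.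
rewrite -[n in n * m]card_ord -sum_nat_const leq_sum // => c _.
by have := no_heavy (lift ord0 c); rewrite lift0 /= -leqNgt.
Qed.

Lemma homogeneous_block_of_const (A : {set F}) c rho :
    (forall f, f \in A -> r f = c) -> 0 < c -> c %| rho -> rho <= c * #|A| ->
  exists2 B : {set F}, B \subset A & homogeneous_block F r rho B.
Proof.
move=> rA c_gt0 c_rho le_rho_A.
have : rho %/ c <= #|A| by rewrite leq_divLR // mulnC.
case/card_geqP => s [uniq_s size_s sub_sA].
have rB f : f \in [set x in s] -> r f = c by rewrite inE => /sub_sA /rA.
exists [set x in s]; first by apply/subsetP => f; rewrite inE => /sub_sA.
split; first by exists c.
by rewrite (eq_bigr _ rB) sum_nat_const cardsE (card_uniqP uniq_s) size_s divnK.
Qed.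

End RequirementClasses.

Theorem mainTheorem7 (F : finType) (r : F -> nat) (F' : {set F}) :
  rmax F r * (lcm_upto (rmax F r) - 1) < \sum_(f in F') r f ->
  exists B : {set F}, B \subset F' /\ homogeneous_block F r (lcm_upto (rmax F r)) B.
Proof.
set M := rmax F r; set rho := lcm_upto M => heavy_F'.
have le_rM f : f \in F' -> r f <= M by move=> _; exact: leq_bigmax.
have [c /andP[c_gt0 le_cM]] := exists_heavy_requirement_class le_rM heavy_F'.
rewrite subn1 prednK ?lcm_upto_gt0 // => heavy_c.
have const_c f : f \in requirement_class r F' c -> r f = c by case/setIdP=> _ /eqP.
have [B sub_B block_B] :=
  homogeneous_block_of_const const_c c_gt0 (dvdn_lcm_upto _ _ c_gt0 le_cM) heavy_c.
by exists B; split=> //; apply/subsetP => f /(subsetP sub_B) /setIdP[].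
Qed.
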